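(* For all integers $n\geq 1$, $\mathrm{secat}(\pi^{n+1}_3)\leq \mathrm{secat}(\pi^n_3)+2$.
   Context: $F(\mathbb{R}^n,k)=\{(x_1,\dots,x_k)\in (\mathbb{R}^n)^k : x_i\neq x_j \text{ for } i\neq j\}$, $B(\mathbb{R}^n,k)=F(\mathbb{R}^n,k)/\Sigma_k$ with $\Sigma_k$ permuting coordinates, and $\pi^n_k\colon F(\mathbb{R}^n,k)\to B(\mathbb{R}^n,k)$ is the quotient covering. $\mathrm{secat}(p)$ of a fibration $p\colon E\to B$ is the least $m$ such that $B$ can be covered by $m+1$ open sets each admitting a local section of $p$. *)

From mathcomp Require Import all_boot all_fingroup.
From Stdlib Require Import Reals.
Set Implicit Arguments. Unset Strict Implicit.
Open Scope R_scope.

Definition Rpt (n : nat) := 'I_n -> R.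

Definition Fconf (n k : nat) :=
  {x : 'I_k -> Rpt n | forall i j : 'I_k, x i = x j -> i = j}.

(* Open subsets of F(R^n,k) for the subspace topology of (R^n)^k = R^{nk}
   (balls of the sup-metric, which generate the Euclidean topology). *)
Definition openF (n k : nat) (A : Fconf n k -> Prop) : Prop :=
  forall x, A x -> exists eps, 0 < eps /\
    forall y : Fconf n k,
      (forall (i : 'I_k) (c : 'I_n), Rabs (proj1_sig y i c - proj1_sig x i c) < eps) ->
      A y.

Definition orbit (n k : nat) (x : Fconf n k) : Fconf n k -> Prop :=
  fun y => exists s : {perm 'I_k}, forall i, proj1_sig y i = proj1_sig x (s i).

(* B(R^n,k) = F(R^n,k)/Sigma_k : points are the Sigma_k-orbits. *)
Definition Bconf (n k : nat) := {P : Fconf n k -> Prop | exists x, P = orbit x}.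

Definition piq (n k : nat) (x : Fconf n k) : Bconf n k :=
  exist _ (orbit x) (ex_intro _ x erefl).

Definition openB (n k : nat) (O : Bconf n k -> Prop) : Prop :=
  openF (fun x => O (piq x)).

(* Continuity of s restricted to U (subspace topology on U ⊆ B). *)
Definition continuous_on (n k : nat) (U : Bconf n k -> Prop)
    (s : Bconf n k -> Fconf n k) : Prop :=
  forall W : Fconf n k -> Prop, openF W ->
    exists O : Bconf n k -> Prop, openB O /\
      forall b, U b -> (W (s b) <-> O b).

Definition local_section (n k : nat) (U : Bconf n k -> Prop)
    (s : Bconf n k -> Fconf n k) : Prop :=
  continuous_on U s /\ forall b, U b -> piq (s b) = b.

Definition secat_le (n k m : nat) : Prop :=
  exists (U : nat -> Bconf n k -> Prop) (s : nat -> Bconf n k -> Fconf n k),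
    (forall i, (i <= m)%nat -> openB (U i) /\ local_section (U i) (s i)) /\
    (forall b, exists i, (i <= m)%nat /\ U i b).

From Pilot Require Import Defs.
From mathcomp Require Import all_boot all_fingroup.
From Stdlib Require Import Reals Lra Classical ClassicalEpsilon.
From Stdlib Require Import FunctionalExtensionality PropExtensionality ProofIrrelevance.
Set Implicit Arguments. Unset Strict Implicit.
Open Scope R_scope.

(* Write a point u of R^(n+1) as (base u, height u) in R^n x R.  Given an open
   cover U_0, ..., U_m of B(R^n,3) with local sections s_i, we cover
   B(R^(n+1),3) by m+3 open sets, each together with a rule saying how to order
   the three points of a configuration:
   - for i <= m: the base points are still pairwise distinct, their unordered
     configuration lies in U_i, and we order them as s_i does;
   - the "collision" set: the pair with the closest bases is strictly closer
     than the two other pairs; put that pair last, ordered by height;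
   - the "height" set: the three heights are distinct; order by height.  The theorem
   then reduces to the openness and rigidity of the three kinds of rules and to
   a covering argument: if two base points coincide and two heights coincide,
   then the third base point lies elsewhere, which is a collision. *)

Definition reorder (N k : nat) (a : 'I_k -> Rpt N) (p : {perm 'I_k}) : 'I_k -> Rpt N :=
  fun i => a (p i).

Lemma reorder_inj N k (x : Fconf N k) (p : {perm 'I_k}) :
  forall i j, reorder (proj1_sig x) p i = reorder (proj1_sig x) p j -> i = j.
Proof. by move=> i j /(proj2_sig x) /perm_inj. Qed.

Definition Freorder N k (x : Fconf N k) (p : {perm 'I_k}) : Fconf N k :=
  exist _ (reorder (proj1_sig x) p) (@reorder_inj N k x p).

Definition close (N k : nat) (d : R) (a b : 'I_k -> Rpt N) :=
  forall i c, Rabs (b i c - a i c) < d.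

Lemma close_coord N k (d : R) (a b : 'I_k -> Rpt N) j c : close d a b ->
  a j c - d < b j c < a j c + d.
Proof. by move=> H; have := H j c; move/Rabs_def2; lra. Qed.

Section Quotient.
Variables N k : nat.

Lemma Bconf_eq (b1 b2 : Bconf N k) : proj1_sig b1 = proj1_sig b2 -> b1 = b2.
Proof.
case: b1 b2 => [P1 h1] [P2 h2] /= E; subst P2.
by rewrite (proof_irrelevance _ h1 h2).
Qed.

Lemma piq_reorder (x y : Fconf N k) (t : {perm 'I_k}) :
  (forall i, proj1_sig y i = proj1_sig x (t i)) -> piq y = piq x.
Proof.
move=> H; apply: Bconf_eq => /=.
apply: functional_extensionality => z; apply: propositional_extensionality; split.
- by case=> s Hs; exists (s * t)%g => i; rewrite Hs H permM.
- by case=> s Hs; exists (s * t^-1)%g => i; rewrite Hs permM H permKV.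
Qed.

Lemma piq_eq_reorder (x y : Fconf N k) : piq y = piq x ->
  exists t : {perm 'I_k}, forall i, proj1_sig y i = proj1_sig x (t i).
Proof.
move=> /(f_equal (@proj1_sig _ _)) /= E.
have : Defs.orbit y y by exists 1%g => i; rewrite perm1.
by rewrite E.
Qed.

Definition rep (b : Bconf N k) : Fconf N k :=
  proj1_sig (constructive_indefinite_description _ (proj2_sig b)).

Lemma piq_rep (b : Bconf N k) : piq (rep b) = b.
Proof.
apply: Bconf_eq => /=; rewrite /rep.
by case: constructive_indefinite_description.
Qed.

Lemma rep_piq (x : Fconf N k) : exists t : {perm 'I_k},
  forall i, proj1_sig (rep (piq x)) i = proj1_sig x (t i).
Proof. by apply: piq_eq_reorder; rewrite piq_rep. Qed.

End Quotient.

Definition rigid_rule (N k : nat) (rule : ('I_k -> Rpt N) -> Prop) : Prop :=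
  forall (x : Fconf N k) (p q : {perm 'I_k}),
    rule (reorder (proj1_sig x) p) -> rule (reorder (proj1_sig x) q) -> p = q.

Definition open_rule (N k : nat) (rule : ('I_k -> Rpt N) -> Prop) : Prop :=
  forall a, rule a -> exists d, 0 < d /\ forall b, close d a b -> rule b.

(* Every rigid open ordering rule defines an open subset of B(R^N,k), the
   configurations some ordering of which satisfies the rule, together with a
   continuous section: order the configuration by the rule. *)
Section OrderingRule.
Variables (N k : nat) (rule : ('I_k -> Rpt N) -> Prop).

Definition admits (x : Fconf N k) : Prop := exists p, rule (reorder (proj1_sig x) p).

Definition ordering (x : Fconf N k) : {perm 'I_k} :=
  match excluded_middle_informative (admits x) with
  | left H => proj1_sig (constructive_indefinite_description _ H)
  | right _ => 1%g
  end.

Lemma orderingP (x : Fconf N k) : admits x -> rule (reorder (proj1_sig x) (ordering x)).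
Proof.
move=> Ax; rewrite /ordering; case: excluded_middle_informative => // H.
exact: (proj2_sig (constructive_indefinite_description _ H)).
Qed.

Definition rule_set (b : Bconf N k) : Prop := admits (rep b).

Definition rule_section (b : Bconf N k) : Fconf N k :=
  Freorder (rep b) (ordering (rep b)).

Lemma admits_reorder (x y : Fconf N k) (t : {perm 'I_k}) :
  (forall i, proj1_sig y i = proj1_sig x (t i)) -> admits x -> admits y.
Proof.
move=> H [p Hp]; exists (p * t^-1)%g.
suff -> : reorder (proj1_sig y) (p * t^-1)%g = reorder (proj1_sig x) p by [].
by apply: functional_extensionality => i; rewrite /reorder permM H permKV.
Qed.

Lemma rule_set_piq (x : Fconf N k) : rule_set (piq x) <-> admits x.
Proof.
have [t Ht] := rep_piq x; split.
- by apply: (admits_reorder (t := t^-1%g)) => i; rewrite Ht permKV.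
- exact: admits_reorder Ht.
Qed.

Lemma rule_section_piq (x : Fconf N k) : admits x -> exists r,
  rule (reorder (proj1_sig x) r) /\
  proj1_sig (rule_section (piq x)) = reorder (proj1_sig x) r.
Proof.
move=> Ax; have [t Ht] := rep_piq x.
have Ar : admits (rep (piq x)) by apply: admits_reorder Ht Ax.
exists (ordering (rep (piq x)) * t)%g.
suff -> : reorder (proj1_sig x) (ordering (rep (piq x)) * t)%g
   = reorder (proj1_sig (rep (piq x))) (ordering (rep (piq x))).
  by split; [exact: orderingP|].
by apply: functional_extensionality => i; rewrite /reorder permM Ht.
Qed.

Lemma rule_section_lifts (b : Bconf N k) : piq (rule_section b) = b.
Proof.
rewrite -{2}(piq_rep b); exact: (piq_reorder (t := ordering (rep b))).
Qed.

Hypotheses (rule_rigid : rigid_rule rule) (rule_open : open_rule rule).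

Lemma rule_set_open : openB rule_set.
Proof.
move=> x /rule_set_piq [p Hp]; have [d [d0 Hd]] := rule_open Hp.
exists d; split => // y Hy; apply/rule_set_piq; exists p.
by apply: Hd => i c; apply: Hy.
Qed.

(* Near a configuration ordered by the rule, the rule picks the same
   reordering, so the section is continuous. *)
Lemma rule_section_continuous : continuous_on rule_set rule_section.
Proof.
move=> W HW; exists (fun b => rule_set b /\ W (rule_section b)); split; last first.
  by move=> b Ub; split; [move=> ?; split | case].
move=> x [/rule_set_piq Ax Wx]; have [r [Rr Er]] := rule_section_piq Ax.
have [e [e0 He]] := HW _ Wx; have [d [d0 Hd]] := rule_open Rr.
exists (Rmin e d); split; first exact: Rmin_glb_lt.
move=> y Hy.
have near_y : forall i c, Rabs (proj1_sig y (r i) c - proj1_sig x (r i) c) < Rmin e d.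
  by move=> i c; apply: Hy.
have Ry : rule (reorder (proj1_sig y) r).
  by apply: Hd => i c; have := near_y i c; have := Rmin_r e d; rewrite /reorder; lra.
have Ay : admits y by exists r.
split; first exact/rule_set_piq.
have [r' [Rr' Er']] := rule_section_piq Ay.
have rr : r' = r := rule_rigid Rr' Ry.
apply: He => i c; rewrite Er' Er rr /reorder.
by have := near_y i c; have := Rmin_l e d; lra.
Qed.

Lemma rule_local_section : openB rule_set /\ local_section rule_set rule_section.
Proof.
split; first exact: rule_set_open.
by split; [exact: rule_section_continuous | move=> b _; exact: rule_section_lifts].
Qed.

End OrderingRule.

Lemma uniform_pos (T : eqType) (s : seq T) (f : T -> R) :
  (forall t, t \in s -> 0 < f t) -> exists e, 0 < e /\ forall t, t \in s -> e <= f t.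
Proof.
elim: s => [|t s IH] pos; first by exists 1; split => //; lra.
have [e [e0 He]] := IH (fun u us => pos u (mem_behead (s := t :: s) us)).
exists (Rmin (f t) e); split; first by apply: Rmin_glb_lt => //; apply: pos; rewrite mem_head.
move=> u; rewrite in_cons => /orP [/eqP -> | us]; first exact: Rmin_l.
exact: Rle_trans (Rmin_r _ _) (He u us).
Qed.

Definition dist (N : nat) (u v : Rpt N) : R :=
  foldr (fun c acc => Rmax (Rabs (u c - v c)) acc) 0 (enum 'I_N).

Section SupDistance.
Variable N : nat.
Implicit Types u v : Rpt N.

Lemma dist_ge0 u v : 0 <= dist u v.
Proof. rewrite /dist; elim: (enum _) => [|c l IH] /=; [lra | exact: Rle_trans IH (Rmax_r _ _)]. Qed.

Lemma dist_sym u v : dist u v = dist v u.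
Proof. by rewrite /dist; elim: (enum _) => [|c l IH] //=; rewrite IH Rabs_minus_sym. Qed.

Lemma dist_coord u v c : Rabs (u c - v c) <= dist u v.
Proof.
have : c \in enum 'I_N by rewrite mem_enum.
rewrite /dist; elim: (enum _) => [|c' l IH] //=; rewrite in_cons => /orP [/eqP -> | cl].
  exact: Rmax_l.
exact: Rle_trans (IH cl) (Rmax_r _ _).
Qed.

Lemma dist_le u v e : 0 <= e -> (forall c, Rabs (u c - v c) <= e) -> dist u v <= e.
Proof. by move=> e0 H; rewrite /dist; elim: (enum _) => [|c l IH] //=; apply: Rmax_lub. Qed.

Lemma dist_self u : dist u u = 0.
Proof.
apply: Rle_antisym; last exact: dist_ge0.
by apply: dist_le => [|c]; [lra | rewrite Rminus_diag_eq // Rabs_R0; lra].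
Qed.

Lemma dist_pos u v : u <> v -> 0 < dist u v.
Proof.
move=> uv; apply: NNPP => /Rnot_lt_le d0; apply: uv.
apply: functional_extensionality => c; apply: NNPP => /Rminus_eq_contra/Rabs_pos_lt.
by have := dist_coord u v c; lra.
Qed.

Lemma dist_lip u v u' v' e : 0 <= e ->
  (forall c, Rabs (u c - u' c) <= e) -> (forall c, Rabs (v c - v' c) <= e) ->
  dist u' v' <= dist u v + 2 * e.
Proof.
move=> e0 Hu Hv; apply: dist_le => [|c]; first by have := dist_ge0 u v; lra.
have := dist_coord u v c; have := Hu c; have := Hv c; split_Rabs; lra.
Qed.

End SupDistance.

Lemma separation N k (z : Fconf N k) : exists e, 0 < e /\ forall j j',
  (forall c, Rabs (proj1_sig z j c - proj1_sig z j' c) < e) -> j = j'.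
Proof.
pose f (p : 'I_k * 'I_k) := if p.1 == p.2 then 1 else dist (proj1_sig z p.1) (proj1_sig z p.2).
have [e [e0 He]] : exists e, 0 < e /\ forall p, p \in enum {: 'I_k * 'I_k} -> e <= f p.
  apply: uniform_pos => -[j j'] _; rewrite /f /=; case: eqP => [_|jj]; first lra.
  by apply: dist_pos => /(proj2_sig z).
exists (e / 2); split; first lra.
move=> j j' near; apply: NNPP => /eqP jj.
have := He (j, j'); rewrite mem_enum /f /= (negbTE jj) => /(_ isT).
have : dist (proj1_sig z j) (proj1_sig z j') <= e / 2.
  by apply: dist_le => [|c]; [lra | apply: Rlt_le].
lra.
Qed.

Lemma near_conf N k (z : Fconf N k) : exists e, 0 < e /\
  (forall a, close e (proj1_sig z) a -> forall j j', a j = a j' -> j = j') /\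
  (forall a r, close e (proj1_sig z) a -> close e (proj1_sig z) (reorder a r) ->
     forall j, r j = j).
Proof.
have [e [e0 sep]] := separation z.
exists (e / 2); split; first lra; split.
  move=> a Ha j j' E; apply: sep => c.
  by have := Ha j c; have := Ha j' c; rewrite E; split_Rabs; lra.
move=> a r Ha Hr j; apply: sep => c.
by have := Ha (r j) c; have := Hr j c; rewrite /reorder; split_Rabs; lra.
Qed.

Lemma close_open N k (z : Fconf N k) e :
  openF (fun w : Fconf N k => close e (proj1_sig z) (proj1_sig w)).
Proof.
move=> w Hw.
have [d [d0 Hd]] : exists d, 0 < d /\ forall p, p \in enum {: 'I_k * 'I_N} ->
    d <= e - Rabs (proj1_sig w p.1 p.2 - proj1_sig z p.1 p.2).
  by apply: uniform_pos => -[j c] _ /=; have := Hw j c; lra.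
exists d; split => // y Hy j c.
have := Hd (j, c); rewrite mem_enum => /(_ isT) /=.
by have := Hy j c; split_Rabs; lra.
Qed.

Definition i0 : 'I_3 := Ordinal (isT : (0 < 3)%nat).
Definition i1 : 'I_3 := Ordinal (isT : (1 < 3)%nat).
Definition i2 : 'I_3 := Ordinal (isT : (2 < 3)%nat).

Lemma ord3 (i : 'I_3) : i = i0 \/ i = i1 \/ i = i2.
Proof. by case: i => [[|[|[|m]]] h]; [left|right; left|right; right|done]; apply: val_inj. Qed.

Lemma i01 : i0 <> i1. Proof. by move/(f_equal val). Qed.
Lemma i02 : i0 <> i2. Proof. by move/(f_equal val). Qed.
Lemma i12 : i1 <> i2. Proof. by move/(f_equal val). Qed.

Ltac neq3 := first [ exact: i01 | exact: i02 | exact: i12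
  | move/esym; exact: i01 | move/esym; exact: i02 | move/esym; exact: i12 ].

Ltac perm_collision p :=
  match goal with
  | h : fun_of_perm p ?a = ?v, h' : fun_of_perm p ?b = ?v |- _ =>
     have : a = b by apply: (@perm_inj _ p); rewrite h h'
  end; neq3.

Lemma perm3_cases (p : {perm 'I_3}) :
  (p i0 = i0 /\ p i1 = i1 /\ p i2 = i2) \/ (p i0 = i0 /\ p i1 = i2 /\ p i2 = i1) \/
  (p i0 = i1 /\ p i1 = i0 /\ p i2 = i2) \/ (p i0 = i1 /\ p i1 = i2 /\ p i2 = i0) \/
  (p i0 = i2 /\ p i1 = i0 /\ p i2 = i1) \/ (p i0 = i2 /\ p i1 = i1 /\ p i2 = i0).
Proof.
have [h0|[h0|h0]] := ord3 (p i0); have [h1|[h1|h1]] := ord3 (p i1);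
  have [h2|[h2|h2]] := ord3 (p i2); try tauto; exfalso; perm_collision p.
Qed.

Ltac case_perm3 p P0 P1 P2 :=
  have [[P0 [P1 P2]]|[[P0 [P1 P2]]|[[P0 [P1 P2]]|[[P0 [P1 P2]]|[[P0 [P1 P2]]|[P0 [P1 P2]]]]]]]
    := perm3_cases p.

Lemma perm3_eq (p q : {perm 'I_3}) : p i0 = q i0 -> p i1 = q i1 -> p i2 = q i2 -> p = q.
Proof. by move=> h0 h1 h2; apply/permP => i; have [->|[->|->]] := ord3 i. Qed.

Lemma perm3_of (a b c : 'I_3) : a <> b -> a <> c -> b <> c ->
  exists p : {perm 'I_3}, p i0 = a /\ p i1 = b /\ p i2 = c.
Proof.
move=> ab ac bc.
pose f (i : 'I_3) := if val i == 0%nat then a else if val i == 1%nat then b else c.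
have f_inj : injective f.
  move=> i j; rewrite /f.
  have [->|[->|->]] := ord3 i; have [->|[->|->]] := ord3 j => //= E;
   first [ by case: ab | by case: ac | by case: bc
         | by case: ab; rewrite E | by case: ac; rewrite E | by case: bc; rewrite E ].
by exists (perm f_inj); rewrite !permE.
Qed.

Lemma third_index (j k : 'I_3) : j <> k ->
  exists i, i <> j /\ i <> k /\ forall l, l = i \/ l = j \/ l = k.
Proof.
move=> jk; have [Ej|[Ej|Ej]] := ord3 j; have [Ek|[Ek|Ek]] := ord3 k; subst j k => //;
 [exists i2 | exists i1 | exists i2 | exists i0 | exists i1 | exists i0];
 (split; [neq3 | split; [neq3 | move=> l; have [->|[->|->]] := ord3 l; tauto]]).
Qed.

Lemma sort3 (T : 'I_3 -> R) : (forall j j', T j = T j' -> j = j') ->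
  exists p : {perm 'I_3}, T (p i0) < T (p i1) /\ T (p i1) < T (p i2).
Proof.
move=> T_inj.
have n01 : T i0 <> T i1 by move/T_inj; exact: i01.
have n02 : T i0 <> T i2 by move/T_inj; exact: i02.
have n12 : T i1 <> T i2 by move/T_inj; exact: i12.
have [a|a] := Rdichotomy _ _ n01; have [b|b] := Rdichotomy _ _ n02;
  have [c|c] := Rdichotomy _ _ n12;
  first [ exfalso; lra
        | have [p [P0 [P1 P2]]] := @perm3_of i0 i1 i2 ltac:(neq3) ltac:(neq3) ltac:(neq3);
            exists p; rewrite P0 P1 P2; lra
        | have [p [P0 [P1 P2]]] := @perm3_of i0 i2 i1 ltac:(neq3) ltac:(neq3) ltac:(neq3);
            exists p; rewrite P0 P1 P2; lra
        | have [p [P0 [P1 P2]]] := @perm3_of i1 i0 i2 ltac:(neq3) ltac:(neq3) ltac:(neq3);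
            exists p; rewrite P0 P1 P2; lra
        | have [p [P0 [P1 P2]]] := @perm3_of i1 i2 i0 ltac:(neq3) ltac:(neq3) ltac:(neq3);
            exists p; rewrite P0 P1 P2; lra
        | have [p [P0 [P1 P2]]] := @perm3_of i2 i0 i1 ltac:(neq3) ltac:(neq3) ltac:(neq3);
            exists p; rewrite P0 P1 P2; lra
        | have [p [P0 [P1 P2]]] := @perm3_of i2 i1 i0 ltac:(neq3) ltac:(neq3) ltac:(neq3);
            exists p; rewrite P0 P1 P2; lra ].
Qed.

Definition base n (u : Rpt (n + 1)) : Rpt n := fun c => u (widen_ord (leq_addr 1 n) c).
Definition top_coord n : 'I_(n + 1) := Ordinal (n := n + 1) (m := n) ltac:(by rewrite addn1).
Definition height n (u : Rpt (n + 1)) : R := u (top_coord n).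

Lemma base_height_inj n (u v : Rpt (n + 1)) : base u = base v -> height u = height v -> u = v.
Proof.
move=> Hb Hh; apply: functional_extensionality => -[c hc].
case: (ltnP c n) => cn.
  have := f_equal (fun f => f (Ordinal cn)) Hb; rewrite /base.
  by have -> : widen_ord (leq_addr 1 n) (Ordinal cn) = Ordinal hc by apply: val_inj.
have E : c = n by apply/eqP; rewrite eqn_leq cn andbT -ltnS -(addn1 n) hc.
subst c; have -> : Ordinal hc = top_coord n by apply: val_inj.
exact: Hh.
Qed.

Definition base_tuple n k (a : 'I_k -> Rpt (n + 1)) : 'I_k -> Rpt n := fun j => base (a j).

Lemma close_base n k d (a b : 'I_k -> Rpt (n + 1)) :
  close d a b -> close d (base_tuple a) (base_tuple b).
Proof. by move=> H j c; apply: H. Qed.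

Definition base_dist n (u v : Rpt (n + 1)) : R := dist (base u) (base v).

Lemma base_dist_lip n k (d : R) (a b : 'I_k -> Rpt (n + 1)) j l : 0 <= d -> close d a b ->
  base_dist (b j) (b l) <= base_dist (a j) (a l) + 2 * d /\
  base_dist (a j) (a l) <= base_dist (b j) (b l) + 2 * d.
Proof.
move=> d0 /close_base H; split; apply: dist_lip => // c;
  [ rewrite Rabs_minus_sym | rewrite Rabs_minus_sym | | ]; exact: Rlt_le (H _ c).
Qed.

Definition height_rule n (a : 'I_3 -> Rpt (n + 1)) : Prop :=
  height (a i0) < height (a i1) /\ height (a i1) < height (a i2).

Lemma height_rigid n : rigid_rule (@height_rule n).
Proof.
move=> x p q; rewrite /height_rule /reorder => -[a1 a2] [b1 b2].
case_perm3 p P0 P1 P2; rewrite ?P0 ?P1 ?P2 in a1 a2;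
case_perm3 q Q0 Q1 Q2; rewrite ?Q0 ?Q1 ?Q2 in b1 b2;
first [ exfalso; lra | apply: perm3_eq; congruence ].
Qed.

Lemma height_open n : open_rule (@height_rule n).
Proof.
move=> a; rewrite /height_rule => -[h1 h2].
set g1 := height (a i1) - height (a i0).
set g2 := height (a i2) - height (a i1).
have g0 : 0 < Rmin g1 g2 by apply: Rmin_glb_lt; rewrite /g1 /g2; lra.
exists (Rmin g1 g2 / 2); split; first lra.
move=> b H; have := Rmin_l g1 g2; have := Rmin_r g1 g2.
have := close_coord i0 (top_coord n) H; have := close_coord i1 (top_coord n) H.
have := close_coord i2 (top_coord n) H; rewrite /g1 /g2 /height; lra.
Qed.

Definition collision_rule n (a : 'I_3 -> Rpt (n + 1)) : Prop :=
  base_dist (a i1) (a i2) < base_dist (a i0) (a i1) /\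
  base_dist (a i1) (a i2) < base_dist (a i0) (a i2) /\
  height (a i1) < height (a i2).

Lemma collision_rigid n : rigid_rule (@collision_rule n).
Proof.
move=> x p q; set X := proj1_sig x.
have s10 : base_dist (X i1) (X i0) = base_dist (X i0) (X i1) by exact: dist_sym.
have s20 : base_dist (X i2) (X i0) = base_dist (X i0) (X i2) by exact: dist_sym.
have s21 : base_dist (X i2) (X i1) = base_dist (X i1) (X i2) by exact: dist_sym.
rewrite /collision_rule /reorder => -[a1 [a2 a3]] [b1 [b2 b3]].
case_perm3 p P0 P1 P2; rewrite ?P0 ?P1 ?P2 ?s10 ?s20 ?s21 in a1 a2 a3;
case_perm3 q Q0 Q1 Q2; rewrite ?Q0 ?Q1 ?Q2 ?s10 ?s20 ?s21 in b1 b2 b3;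
first [ exfalso; lra | apply: perm3_eq; congruence ].
Qed.

Lemma collision_open n : open_rule (@collision_rule n).
Proof.
move=> a; rewrite /collision_rule => -[h1 [h2 h3]].
set g1 := base_dist (a i0) (a i1) - base_dist (a i1) (a i2).
set g2 := base_dist (a i0) (a i2) - base_dist (a i1) (a i2).
set g3 := height (a i2) - height (a i1).
set g := Rmin g1 (Rmin g2 g3).
have e1 : g <= g1 by apply: Rmin_l.
have e2 : g <= g2 by apply: Rle_trans (Rmin_r _ _) (Rmin_l _ _).
have e3 : g <= g3 by apply: Rle_trans (Rmin_r _ _) (Rmin_r _ _).
have g0 : 0 < g by apply: Rmin_glb_lt; [|apply: Rmin_glb_lt]; rewrite /g1 /g2 /g3; lra.
exists (g / 5); split; first lra.
move=> b H; have d0 : 0 <= g / 5 by lra.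
have [u1 v1] := base_dist_lip i0 i1 d0 H; have [u2 v2] := base_dist_lip i0 i2 d0 H.
have [u3 v3] := base_dist_lip i1 i2 d0 H.
have := close_coord i1 (top_coord n) H; have := close_coord i2 (top_coord n) H.
rewrite /g1 /g2 /g3 /height in e1 e2 e3; rewrite /height; lra.
Qed.

Lemma collision_admits n (x : Fconf (n + 1) 3) i j k : i <> j -> i <> k -> j <> k ->
  base (proj1_sig x j) = base (proj1_sig x k) ->
  base (proj1_sig x i) <> base (proj1_sig x j) ->
  admits (@collision_rule n) x.
Proof.
set X := proj1_sig x => ij ik jk E Eij.
have hjk : height (X j) <> height (X k).
  by move=> Eh; apply: jk; apply: (proj2_sig x); apply: base_height_inj.
have d_jk : base_dist (X j) (X k) = 0 by rewrite /base_dist E dist_self.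
have d_kj : base_dist (X k) (X j) = 0 by rewrite /base_dist E dist_self.
have d_ij : 0 < base_dist (X i) (X j) by apply: dist_pos.
have d_ik : 0 < base_dist (X i) (X k) by rewrite /base_dist -E; apply: dist_pos.
have [lt|lt] := Rdichotomy _ _ hjk.
  have [p [P0 [P1 P2]]] := perm3_of ij ik jk.
  by exists p; rewrite /collision_rule /reorder -/X P0 P1 P2; lra.
have [p [P0 [P1 P2]]] := perm3_of ik ij (fun e => jk (esym e)).
by exists p; rewrite /collision_rule /reorder -/X P0 P1 P2; lra.
Qed.

Section PullbackRule.
Variables (n k : nat) (U : Bconf n k -> Prop) (s : Bconf n k -> Fconf n k).

Definition pull_rule (a : 'I_k -> Rpt (n + 1)) : Prop :=
  exists z : Fconf n k, proj1_sig z = base_tuple a /\ U (piq z) /\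
    proj1_sig (s (piq z)) = proj1_sig z.

Lemma pull_rigid : rigid_rule pull_rule.
Proof.
move=> x p q [z [Ez [Uz Sz]]] [z' [Ez' [Uz' Sz']]].
have E : piq z' = piq z.
  by apply: (piq_reorder (t := (q * p^-1)%g)) => j; rewrite Ez Ez' /base_tuple /reorder permM permKV.
have E2 : proj1_sig z' = proj1_sig z by rewrite -Sz -Sz' E.
apply/permP => j.
have h : proj1_sig z (p^-1 (q j))%g = proj1_sig z j.
  by rewrite -[in RHS]E2 Ez Ez' /base_tuple /reorder permKV.
by rewrite -{1}(proj2_sig z _ _ h) permKV.
Qed.

Hypotheses (U_open : openB U) (s_section : local_section U s).

Lemma pull_admits (x : Fconf (n + 1) k) (z : Fconf n k) :
  proj1_sig z = base_tuple (proj1_sig x) -> U (piq z) -> admits pull_rule x.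
Proof.
move=> Ez Uz; have [_ lifts] := s_section.
have [r Hr] := piq_eq_reorder (lifts _ Uz).
exists r; exists (s (piq z)); split.
  by apply: functional_extensionality => j; rewrite Hr Ez.
by rewrite lifts.
Qed.

(* Perturbing the base points of a pulled-back configuration stays in U, and
   by continuity s keeps ordering the perturbed configuration the same way. *)
Lemma pull_open : open_rule pull_rule.
Proof.
move=> a [z [Ez [Uz Sz]]].
have [e [e0 [near_inj near_id]]] := near_conf z.
have [cont lifts] := s_section.
have [d1 [d10 Hd1]] := U_open Uz.
have [O [oO HO]] := cont _ (close_open (z := z) (e := e)).
have Oz : O (piq z).
  by apply/(HO _ Uz) => j c; rewrite Sz Rminus_diag_eq // Rabs_R0.
have [d2 [d20 Hd2]] := oO z Oz.
pose d := Rmin e (Rmin d1 d2).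
have de : d <= e by apply: Rmin_l.
have dd1 : d <= d1 by apply: Rle_trans (Rmin_r _ _) (Rmin_l _ _).
have dd2 : d <= d2 by apply: Rle_trans (Rmin_r _ _) (Rmin_r _ _).
exists d; split; first by apply: Rmin_glb_lt => //; apply: Rmin_glb_lt.
move=> b /close_base; rewrite -Ez => Hb.
have close_e : close e (proj1_sig z) (base_tuple b) by move=> j c; have := Hb j c; lra.
pose zb : Fconf n k := exist _ (base_tuple b) (near_inj _ close_e).
exists zb; split => //.
have Uzb : U (piq zb) by apply: Hd1 => j c; rewrite /zb /=; have := Hb j c; lra.
have Ozb : O (piq zb) by apply: Hd2 => j c; rewrite /zb /=; have := Hb j c; lra.
split => //.
have [r Hr] := piq_eq_reorder (lifts _ Uzb).
have Sclose : close e (proj1_sig z) (reorder (base_tuple b) r).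
  by move=> j c; have := proj2 (HO _ Uzb) Ozb j c; rewrite Hr.
have rid := near_id _ _ close_e Sclose.
by apply: functional_extensionality => j; rewrite Hr rid.
Qed.

End PullbackRule.

Lemma injective_or_collide (k : nat) (T : Type) (f : 'I_k -> T) :
  (forall j j', f j = f j' -> j = j') \/ exists j j', j <> j' /\ f j = f j'.
Proof.
apply: NNPP => /not_or_and [] /not_all_ex_not [j /not_all_ex_not [j' H]] [].
by exists j, j'; tauto.
Qed.

Lemma cover3 n (x : Fconf (n + 1) 3) :
  (forall j j', base (proj1_sig x j) = base (proj1_sig x j') -> j = j') \/
  admits (@collision_rule n) x \/ admits (@height_rule n) x.
Proof.
set X := proj1_sig x.
have [base_inj|[j [k [jk Ejk]]]] := injective_or_collide (fun j => base (X j)); first by left.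
right; have [height_inj|[j' [k' [jk' Ejk']]]] := injective_or_collide (fun j => height (X j)).
  by right; apply: sort3 height_inj.
left; have [i [ij [ik all]]] := third_index jk.
apply: (collision_admits ij ik jk Ejk) => Eij.
have same_base : forall l, base (X l) = base (X j) by move=> l; have [->|[->|->]] := all l.
by apply: jk'; apply: (proj2_sig x); apply: base_height_inj; rewrite ?same_base.
Qed.

Theorem mainTheorem11 :
  forall n : nat, (1 <= n)%nat ->
  forall m : nat, secat_le n 3 m -> secat_le (n + 1) 3 (m + 2).
Proof.
move=> n _ m [U [s [sections covers]]].
pose rule i : ('I_3 -> Rpt (n + 1)) -> Prop :=
  if (i <= m)%nat then pull_rule (U i) (s i)
  else if i == m.+1 then @collision_rule n else @height_rule n.
exists (fun i => rule_set (rule i)), (fun i => rule_section (rule i)); split.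
  move=> i _; rewrite /rule; case: ifP => [im|_]; last case: ifP => _.
  - have [oU sU] := sections i im.
    by apply: rule_local_section; [exact: pull_rigid | exact: pull_open].
  - by apply: rule_local_section; [exact: collision_rigid | exact: collision_open].
  - by apply: rule_local_section; [exact: height_rigid | exact: height_open].
move=> b; rewrite -(piq_rep b); set x := rep b.
have [base_inj|[collision|heights]] := cover3 x.
- pose z : Fconf n 3 := exist _ (base_tuple (proj1_sig x)) base_inj.
  have [i [im Ui]] := covers (piq z).
  exists i; split; first by rewrite (leq_trans im) // leq_addr.
  apply/rule_set_piq; rewrite /rule im.
  by have [_ sU] := sections i im; apply: (pull_admits sU (z := z)).
- exists m.+1; split; first by rewrite addn2 ltnW.
  by apply/rule_set_piq; rewrite /rule ltnn eqxx.
- exists (m + 2)%nat; split => //.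
  apply/rule_set_piq; rewrite /rule addn2 ltnNge ltnW //=.
  by rewrite eqSS (gtn_eqF (ltnSn m)).
Qed.
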